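(* Let $A \in \mathbb{R}^{m \times r}$, $b \in \mathbb{R}^m$, and $P = \{ x \in \mathbb{R}^r \mid Ax \ge b\}$. Then $P$ has only finitely many convex-conformally non-decomposable vectors.
   Context: For $x \in \mathbb{R}^n$, $\operatorname{sign}(x) \in \{-,0,+\}^n$ is obtained by applying the sign function componentwise; the relations $0<-$, $0<+$ induce a componentwise partial order on $\{-,0,+\}^n$. A vector $x \in P$ is convex-conformally non-decomposable if for all $x^1,x^2 \in P$ with $\operatorname{sign}(x^1),\operatorname{sign}(x^2) \le \operatorname{sign}(x)$ and all $0<\lambda<1$, $x = \lambda x^1 + (1-\lambda)x^2$ implies $x^1 = x^2$. *)

From mathcomp Require Import all_boot all_order all_algebra.
From mathcomp Require Import reals.
Set Implicit Arguments. Unset Strict Implicit. Unset Printing Implicit Defensive.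
Import Order.TTheory GRing.Theory Num.Theory.
Local Open Scope ring_scope.

Definition polyhedron (R : realType) (m r : nat)
  (A : 'M[R]_(m, r)) (b : 'cV[R]_m) : pred 'cV[R]_r :=
  fun x => [forall i, b i 0 <= (A *m x) i 0].

Definition sign_le (R : realType) (r : nat) (y x : 'cV[R]_r) : Prop :=
  forall i, Num.sg (y i 0) = 0 \/ Num.sg (y i 0) = Num.sg (x i 0).

Definition ccnd (R : realType) (r : nat) (P : pred 'cV[R]_r) (x : 'cV[R]_r)
  : Prop :=
  P x /\
  forall (x1 x2 : 'cV[R]_r) (lam : R),
    P x1 -> P x2 -> sign_le x1 x -> sign_le x2 x ->
    0 < lam -> lam < 1 ->
    x = lam *: x1 + (1 - lam) *: x2 -> x1 = x2.

From mathcomp Require Import all_boot all_order all_algebra.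
From mathcomp Require Import reals.
From mathcomp Require Import ring lra.
From Stdlib Require Import Classical.
Set Implicit Arguments. Unset Strict Implicit. Unset Printing Implicit Defensive.
Import Order.TTheory GRing.Theory Num.Theory.
Local Open Scope ring_scope.

(* A convex-conformally non-decomposable x is determined by its zero pattern and its set of tight
   inequalities: if y shares both, then every entry of d := y - x vanishes
   where x does and every row of A d vanishes where A x = b, so x + t d stays
   in P with sign pattern below that of x for all small |t|.  Then
   x = (x + t d)/2 + (x - t d)/2 forces d = 0.  Since there are only finitely
   many pairs (zero pattern, tight set), there are finitely many ccnd
   vectors. *)

Lemma exists_small_scale (R : realFieldType) (T : finType) (P : pred T)
    (a s : T -> R) :
  (forall t, P t -> 0 < s t) ->
  exists2 e, 0 < e & forall t, P t -> e * `|a t| < s t.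
Proof.
move=> s_gt0; set S := \sum_(t | P t) `|a t| / s t.
have S_ge0 : 0 <= S by apply: sumr_ge0 => t Pt; rewrite divr_ge0 // ltW // s_gt0.
have S1_gt0 : 0 < 1 + S by rewrite ltr_wpDr.
exists (1 + S)^-1 => [|t Pt]; first by rewrite invr_gt0.
have st_gt0 := s_gt0 t Pt.
have at_le : `|a t| / s t <= S.
  rewrite /S (bigD1 t) //= lerDl.
  by apply: sumr_ge0 => u /andP[Pu _]; rewrite divr_ge0 // ltW // s_gt0.
rewrite ler_pdivrMr // in at_le.
rewrite mulrC ltr_pdivrMr //; nra.
Qed.

Lemma sgrD_small (R : realDomainType) (a e : R) :
  `|e| < `|a| -> Num.sg (a + e) = Num.sg a.
Proof.
move=> e_lt_a; have e_le := ler_norm e.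
have e_le' : - e <= `|e| by rewrite -normrN ler_norm.
case: (ltgtP a 0) => a0.
- by rewrite (ltr0_norm a0) in e_lt_a; rewrite (ltr0_sg a0) ltr0_sg //; lra.
- by rewrite (gtr0_norm a0) in e_lt_a; rewrite (gtr0_sg a0) gtr0_sg //; lra.
- by move: e_lt_a; rewrite a0 normr0 ltNge normr_ge0.
Qed.

Section Perturbation.
Variables (R : realType) (r : nat) (x d : 'cV[R]_r).

Lemma sign_le_line :
  (forall j, x j 0 = 0 -> d j 0 = 0) ->
  exists2 e, 0 < e & forall t, `|t| <= e -> sign_le (x + t *: d) x.
Proof.
move=> d_supp.
have norm_gt0 j : x j 0 != 0 -> 0 < `|x j 0| by rewrite normr_gt0.
have [e e_gt0 small] := @exists_small_scale R _ (fun j : 'I_r => x j 0 != 0)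
  (fun j => d j 0) (fun j => `|x j 0|) norm_gt0.
exists e => // t t_le j; rewrite !mxE.
have [xj0 | xj_neq0] := eqVneq (x j 0) 0.
  by left; rewrite xj0 d_supp // mulr0 addr0 sgr0.
right; apply: sgrD_small; rewrite normrM.
have := small j xj_neq0.
have : `|t| * `|d j 0| <= e * `|d j 0| by rewrite ler_wpM2r.
lra.
Qed.

Variables (m : nat) (A : 'M[R]_(m, r)) (b : 'cV[R]_m).

Lemma polyhedron_line :
  polyhedron A b x ->
  (forall i, (A *m x) i 0 = b i 0 -> (A *m d) i 0 = 0) ->
  exists2 e, 0 < e & forall t, `|t| <= e -> polyhedron A b (x + t *: d).
Proof.
move=> Px d_tight.
have slack_gt0 i : (A *m x) i 0 != b i 0 -> 0 < (A *m x) i 0 - b i 0.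
  by move=> neq; rewrite subr_gt0 lt_neqAle eq_sym neq (forallP Px i).
have [e e_gt0 small] := @exists_small_scale R _
  (fun i : 'I_m => (A *m x) i 0 != b i 0)
  (fun i => (A *m d) i 0) (fun i => (A *m x) i 0 - b i 0) slack_gt0.
exists e => // t t_le; apply/forallP => i.
rewrite mulmxDr -scalemxAr mxE [X in _ + X]mxE.
have [tight | slack] := eqVneq ((A *m x) i 0) (b i 0).
  by rewrite d_tight // mulr0 addr0 tight.
have := small i slack.
have : - (t * (A *m d) i 0) <= `|t| * `|(A *m d) i 0|.
  by rewrite -normrM -normrN ler_norm.
have : `|t| * `|(A *m d) i 0| <= e * `|(A *m d) i 0| by rewrite ler_wpM2r.
lra.
Qed.

End Perturbation.

Lemma ccnd_symmetric_perturbation (R : realType) (r : nat)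
    (P : pred 'cV[R]_r) (x d : 'cV[R]_r) :
  ccnd P x -> P (x + d) -> P (x - d) ->
  sign_le (x + d) x -> sign_le (x - d) x -> d = 0.
Proof.
move=> [_ x_ccnd] Pplus Pminus Splus Sminus.
have mid : x = (1 / 2) *: (x + d) + (1 - 1 / 2) *: (x - d).
  by apply/matrixP => i j; rewrite !mxE; lra.
have plus_eq_minus := x_ccnd _ _ (1 / 2) Pplus Pminus Splus Sminus
  ltac:(lra) ltac:(lra) mid.
apply/matrixP => i j; move/matrixP/(_ i j): plus_eq_minus; rewrite !mxE; lra.
Qed.

Lemma ccnd_polyhedron_unique (R : realType) (m r : nat)
    (A : 'M[R]_(m, r)) (b : 'cV[R]_m) (x y : 'cV[R]_r) :
  ccnd (polyhedron A b) x ->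
  (forall j, (x j 0 == 0) = (y j 0 == 0)) ->
  (forall i, ((A *m x) i 0 == b i 0) = ((A *m y) i 0 == b i 0)) -> y = x.
Proof.
move=> x_ccnd same_zeros same_tight; set d := y - x.
have d_supp j : x j 0 = 0 -> d j 0 = 0.
  move=> /eqP xj0; move: (xj0); rewrite same_zeros => /eqP yj0.
  by rewrite !mxE yj0 (eqP xj0) subrr.
have d_tight i : (A *m x) i 0 = b i 0 -> (A *m d) i 0 = 0.
  move=> /eqP ti; move: (ti); rewrite same_tight => /eqP tyi.
  by rewrite mulmxBr mxE [X in _ + X]mxE tyi (eqP ti) subrr.
have [e1 e1_gt0 S] := sign_le_line d_supp.
have [e2 e2_gt0 Pl] := polyhedron_line x_ccnd.1 d_tight.
set e := Num.min e1 e2.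
have e_gt0 : 0 < e by rewrite lt_min e1_gt0.
have small t : `|t| <= e ->
    polyhedron A b (x + t *: d) /\ sign_le (x + t *: d) x.
  move=> t_le; split; [apply: Pl | apply: S];
    by apply: le_trans t_le _; rewrite ge_min lexx ?orbT.
have [P_plus S_plus] := small e ltac:(by rewrite gtr0_norm).
have [P_minus S_minus] := small (- e) ltac:(by rewrite normrN gtr0_norm).
rewrite scaleNr in P_minus S_minus.
have /eqP := ccnd_symmetric_perturbation x_ccnd P_plus P_minus S_plus S_minus.
by rewrite scaler_eq0 (gt_eqF e_gt0) subr_eq0 => /eqP.
Qed.

Lemma finite_of_injective_key (T : eqType) (K : finType) (Q : T -> Prop)
    (key : T -> K) :
  (forall x y, Q x -> Q y -> key x = key y -> x = y) ->
  exists s : seq T, forall x, Q x -> x \in s.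
Proof.
move=> key_inj.
suff [s Hs] : exists s : seq T, forall x, Q x -> key x \in enum K -> x \in s.
  by exists s => x Qx; apply: Hs; rewrite ?mem_enum.
elim: (enum K) => [|k ks [s Hs]]; first by exists [::].
have [[x0 [Qx0 kx0]] | no_x] := classic (exists x, Q x /\ key x = k).
  exists (x0 :: s) => x Qx; rewrite !inE => /orP[/eqP kx | kx].
    by rewrite (key_inj x x0) ?eqxx // kx kx0.
  by rewrite Hs ?orbT.
exists s => x Qx; rewrite inE => /orP[/eqP kx | ]; last exact: Hs.
by case: no_x; exists x.
Qed.

Theorem proposition5 (R : realType) (m r : nat)
  (A : 'M[R]_(m, r)) (b : 'cV[R]_m) :
  exists s : seq 'cV[R]_r,
    forall x : 'cV[R]_r, ccnd (polyhedron A b) x -> x \in s.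
Proof.
pose key (x : 'cV[R]_r) : {set 'I_r} * {set 'I_m} :=
  ([set j | x j 0 == 0], [set i | (A *m x) i 0 == b i 0]).
apply: (finite_of_injective_key (key := key)) => x y x_ccnd _ [zx tx].
apply/esym/(ccnd_polyhedron_unique x_ccnd) => [j | i].
  by move/setP/(_ j): zx; rewrite !inE.
by move/setP/(_ i): tx; rewrite !inE.
Qed.
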